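(* Let $A$ be a complex unital semi-prime Banach algebra, let $J$ be a (two-sided) ideal of $A$, let $\pi:A\to A/J$ be the canonical projection, and let $\tau:J\to\mathbb{C}$ be a trace on $J$. Let $a\in A$ be a B-Fredholm element of $A$ modulo $J$. Then for every $a_0\in A$ such that $\pi(a_0)$ is the Drazin inverse of $\pi(a)$ in $A/J$, one has $aa_0-a_0a\in J$. Moreover, the number $\tau(aa_0-a_0a)$ is the same for all such $a_0$. Consequently the index $\mathbf{i}(a)=\tau(aa_0-a_0a)$ is well defined and independent of the choice of $a_0$.
   Context: A Banach algebra $A$ is semi-prime if, for $u\in A$, $uxu=0$ for all $x\in A$ implies $u=0$. A nonzero element $p$ of a semi-prime algebra $A$ has rank one if there is a linear functional $f_p$ on $A$ with $pxp=f_p(x)p$ for all $x\in A$. An element $x$ of an algebra $B$ is Drazin invertible if there exist $y\in B$ and $k\ge 1$ with $xy=yx$, $yxy=y$, and $x^kyx=x^k$; such $y$ is unique and is called the Drazin inverse of $x$. An element $a\in A$ is a B-Fredholm element of $A$ modulo $J$ if $\pi(a)$ is Drazin invertible in the quotient algebra $A/J$ (the quotient is not required to be a Banach algebra). A trace on $J$ is a function $\tau:J\to\mathbb{C}$ such that: (1) $\tau(p)=1$ for every idempotent $p\in J$ of rank one; (2) $\tau(a+b)=\tau(a)+\tau(b)$ for $a,b\in J$; (3) $\tau(\alpha a)=\alpha\tau(a)$ for $\alpha\in\mathbb{C}$, $a\in J$; (4) $\tau(ab)=\tau(ba)$ for all $a\in J$, $b\in A$. *)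

From HB Require Import structures.
From mathcomp Require Import all_boot all_order all_algebra.
From mathcomp Require Import reals.
From mathcomp Require Import complex.
Set Implicit Arguments. Unset Strict Implicit. Unset Printing Implicit Defensive.
Import Order.TTheory GRing.Theory Num.Theory.
Local Open Scope ring_scope.

Local Open Scope complex_scope.
Local Open Scope ring_scope.

Definition banach_algebra_norm (R : realType) (A : algType R[i])
    (nrm : A -> R) : Prop :=
  [/\ (forall x : A, 0 <= nrm x),
      (forall x : A, nrm x = 0 -> x = 0),
      (forall x y : A, nrm (x + y) <= nrm x + nrm y),
      (forall (c : R[i]) (x : A), (nrm (c *: x))%:C = `|c| * (nrm x)%:C) &
      ((forall x y : A, nrm (x * y) <= nrm x * nrm y) /\
      (forall u : nat -> A,
         (forall e : R, 0 < e -> exists N : nat, forall m n : nat,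
             (N <= m)%N -> (N <= n)%N -> nrm (u m - u n) < e) ->
         exists l : A, forall e : R, 0 < e -> exists N : nat, forall n : nat,
             (N <= n)%N -> nrm (u n - l) < e))].

Section Defs.
Variable K : fieldType.
Variable A : algType K.

Definition semi_prime : Prop :=
  forall u : A, (forall x : A, u * x * u = 0) -> u = 0.

Definition rank_one (p : A) : Prop :=
  p != 0 /\
  exists f : A -> K,
    (forall (c : K) (x y : A), f (c *: x + y) = c * f x + f y) /\
    (forall x : A, p * x * p = f x *: p).

Definition two_sided_ideal (J : {pred A}) : Prop :=
  [/\ 0 \in J,
      (forall x y, x \in J -> y \in J -> x + y \in J),
      (forall a x, x \in J -> a * x \in J) &
      (forall a x, x \in J -> x * a \in J)].

(* a trace on J (a function defined on J; values outside J are irrelevant) *)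
Definition trace_on (J : {pred A}) (tau : A -> K) : Prop :=
  [/\ (forall p, p \in J -> p * p = p -> rank_one p -> tau p = 1),
      (forall a b, a \in J -> b \in J -> tau (a + b) = tau a + tau b),
      (forall (al : K) a, a \in J -> tau (al *: a) = al * tau a) &
      (forall a b, a \in J -> tau (a * b) = tau (b * a))].

(* equality in the quotient algebra A/J: pi x = pi y  <->  x - y \in J *)
Definition eqmodJ (J : {pred A}) (x y : A) : Prop := x - y \in J.

Definition drazin_inv_mod (J : {pred A}) (x y : A) : Prop :=
  exists k : nat, (1 <= k)%N /\
    [/\ eqmodJ J (x * y) (y * x),
        eqmodJ J (y * x * y) y &
        eqmodJ J (x ^+ k * y * x) (x ^+ k)].

Definition B_Fredholm_mod (J : {pred A}) (a : A) : Prop :=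
  exists y : A, drazin_inv_mod J a y.

End Defs.

(* The Drazin inverse of an element of a ring is unique, and the usual proof
   only uses ring identities, so it can be run in A/J: any two a0, a1 whose
   images are Drazin inverses of pi(a) satisfy a0 - a1 = d in J.  Then
   (a a0 - a0 a) - (a a1 - a1 a) = a d - d a, and tau(a d) = tau(d a) makes
   the trace of this difference vanish. *)
From HB Require Import structures.
From mathcomp Require Import all_boot all_order all_algebra.
From mathcomp Require Import reals.
From mathcomp Require Import complex.
From Stdlib Require Import Setoid Morphisms.
Import GRing.Theory.
Set Implicit Arguments. Unset Strict Implicit.
Local Open Scope ring_scope.

Section IdealCongruence.
Variables (K : fieldType) (A : algType K) (J : {pred A}).
Hypothesis idealJ : two_sided_ideal J.

Lemma ideal_oppr_closed x : x \in J -> - x \in J.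
Proof. by case: idealJ => _ _ JMl _ Jx; rewrite -mulN1r JMl. Qed.

Lemma eqmodJ_refl x : eqmodJ J x x.
Proof. by rewrite /eqmodJ subrr; case: idealJ. Qed.
#[local] Hint Resolve eqmodJ_refl : core.

Lemma eqmodJ_sym x y : eqmodJ J x y -> eqmodJ J y x.
Proof. by rewrite /eqmodJ => Jxy; rewrite -opprB ideal_oppr_closed. Qed.

Lemma eqmodJ_trans x y z : eqmodJ J x y -> eqmodJ J y z -> eqmodJ J x z.
Proof.
rewrite /eqmodJ => Jxy Jyz; case: idealJ => _ JD _ _.
by have := JD _ _ Jxy Jyz; rewrite addrA subrK.
Qed.

Add Parametric Relation : A (eqmodJ J)
  reflexivity proved by eqmodJ_refl
  symmetry proved by eqmodJ_sym
  transitivity proved by eqmodJ_trans as eqmodJ_rel.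

Add Parametric Morphism : (@GRing.mul A) with signature
  eqmodJ J ==> eqmodJ J ==> eqmodJ J as eqmodJ_mul.
Proof.
move=> x x' Jx y y' Jy; rewrite /eqmodJ.
have -> : x * y - x' * y' = (x - x') * y + x' * (y - y').
  by rewrite mulrBl mulrBr addrA subrK.
by case: idealJ => _ JD JMl JMr; apply: JD; [apply: JMr | apply: JMl].
Qed.

Local Notation commJ x y := (eqmodJ J (x * y) (y * x)).

Lemma commJ_sym x y : commJ x y -> commJ y x.
Proof. exact: eqmodJ_sym. Qed.

Lemma commJXl x y n : commJ x y -> commJ (x ^+ n) y.
Proof.
move=> cxy; elim: n => [|n IHn]; first by rewrite expr0 mul1r mulr1.
by rewrite exprSr -mulrA cxy mulrA IHn -mulrA -exprSr.
Qed.

Lemma exprMn_commJ x y n : commJ x y -> eqmodJ J ((x * y) ^+ n) (x ^+ n * y ^+ n).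
Proof.
move=> cxy; elim: n => [|n IHn]; first by rewrite !expr0 mul1r.
have cyx : commJ (y ^+ n) x by exact/commJXl/commJ_sym.
by rewrite exprSr IHn -mulrA (mulrA (y ^+ n)) cyx -!mulrA mulrA -!exprSr.
Qed.

Lemma idempotentJ_exprS e n : eqmodJ J (e * e) e -> eqmodJ J (e ^+ n.+1) e.
Proof.
move=> ee; elim: n => [|n IHn]; first by rewrite expr1.
by rewrite exprSr IHn ee.
Qed.

Lemma drazin_inv_mod_exprD x y j k :
  eqmodJ J (x ^+ k * y * x) (x ^+ k) ->
  eqmodJ J (x ^+ (j + k) * y * x) (x ^+ (j + k)).
Proof.
rewrite /eqmodJ exprD -!mulrA -mulrBr => Jk.
by case: idealJ => _ _ JMl _; rewrite JMl // !mulrA.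
Qed.

Section DrazinIdentities.
Variables (x y : A) (m : nat).
Hypotheses (m_gt0 : (0 < m)%N) (cxy : commJ x y)
  (yxy : eqmodJ J (y * x * y) y) (xmyx : eqmodJ J (x ^+ m * y * x) (x ^+ m)).

Lemma drazin_mulE : eqmodJ J (x * y) (x ^+ m * y ^+ m).
Proof.
case: m m_gt0 xmyx => // n _ _.
rewrite -exprMn_commJ // idempotentJ_exprS //.
by rewrite -mulrA (mulrA y) yxy.
Qed.

Lemma drazin_mulE_rev : eqmodJ J (x * y) (y ^+ m * x ^+ m).
Proof.
case: m m_gt0 xmyx => // n _ _.
rewrite cxy -exprMn_commJ; last exact: commJ_sym.
by rewrite idempotentJ_exprS // mulrA yxy.
Qed.

Lemma drazin_exprM_mul : eqmodJ J (x ^+ m * (x * y)) (x ^+ m).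
Proof. by rewrite cxy mulrA xmyx. Qed.

Lemma drazin_mul_exprM : eqmodJ J (x * y * x ^+ m) (x ^+ m).
Proof.
have cxmy : commJ (x ^+ m) y by exact: commJXl.
by rewrite -mulrA -cxmy mulrA -exprS exprSr -mulrA cxy mulrA xmyx.
Qed.

End DrazinIdentities.

Lemma drazin_inv_mod_unique x y z :
  drazin_inv_mod J x y -> drazin_inv_mod J x z -> eqmodJ J y z.
Proof.
move=> [k [k_gt0 [cxy yxy xkyx]]] [l [l_gt0 [cxz zxz xlzx]]].
have m_gt0 : (0 < l + k)%N by rewrite addn_gt0 k_gt0 orbT.
have xmyx := drazin_inv_mod_exprD l xkyx.
have xmzx : eqmodJ J (x ^+ (l + k) * z * x) (x ^+ (l + k)).
  by rewrite addnC; apply: drazin_inv_mod_exprD.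
(* The idempotents x y and x z are both congruent to x z * x y. *)
have xy_xz : eqmodJ J (x * y) (x * z).
  transitivity (x * z * (x * y)).
    rewrite {2}(drazin_mulE m_gt0 cxy yxy xmyx) mulrA.
    rewrite (drazin_mul_exprM cxz xmzx).
    exact: drazin_mulE.
  rewrite {1}(drazin_mulE_rev m_gt0 cxz zxz xmzx) -mulrA.
  rewrite (drazin_exprM_mul cxy xmyx).
  by symmetry; apply: drazin_mulE_rev.
by rewrite -{1}yxy -mulrA xy_xz mulrA -cxy xy_xz cxz zxz.
Qed.

End IdealCongruence.

Section TraceOfCommutators.
Variables (K : fieldType) (A : algType K) (J : {pred A}) (tau : A -> K).
Hypotheses (idealJ : two_sided_ideal J) (trace_tau : trace_on J tau).

Lemma trace_commutator a d : d \in J -> tau (a * d - d * a) = 0.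
Proof.
case: idealJ trace_tau => _ _ JMl JMr [_ tauD tauZ tauC] Jd.
have Jda : - (d * a) \in J by rewrite -mulNr JMr // ideal_oppr_closed.
rewrite tauD ?JMl // -scaleN1r tauZ ?JMr // (tauC d) //.
by rewrite mulN1r subrr.
Qed.

Lemma trace_commutator_eqmodJ a b c :
  a * c - c * a \in J -> eqmodJ J b c ->
  tau (a * b - b * a) = tau (a * c - c * a).
Proof.
move=> Jac Jbc.
have -> : a * b - b * a = (a * c - c * a) + (a * (b - c) - (b - c) * a).
  by rewrite mulrBr mulrBl opprB addrACA addKr addrCA subrr addr0.
have Jbca : a * (b - c) - (b - c) * a \in J.
  case: idealJ => _ JD JMl JMr.
  by apply: JD; [apply: JMl | apply/ideal_oppr_closed/JMr].
case: trace_tau => _ tauD _ _.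
by rewrite tauD // (@trace_commutator a (b - c) Jbc) addr0.
Qed.

End TraceOfCommutators.

Theorem theorem2p3 (R : realType) (A : algType R[i]) (nrm : A -> R)
  (J : {pred A}) (tau : A -> R[i]) :
  banach_algebra_norm nrm ->
  semi_prime A ->
  two_sided_ideal J ->
  trace_on J tau ->
  forall a : A, B_Fredholm_mod J a ->
  (forall a0 : A, drazin_inv_mod J a a0 -> a * a0 - a0 * a \in J) /\
  (forall a0 a1 : A, drazin_inv_mod J a a0 -> drazin_inv_mod J a a1 ->
     tau (a * a0 - a0 * a) = tau (a * a1 - a1 * a)).
Proof.
move=> _ _ idealJ trace_tau a _.
have commutator_in_J a0 : drazin_inv_mod J a a0 -> a * a0 - a0 * a \in J.
  by case=> k [_ []].
split=> // a0 a1 a0_drazin a1_drazin.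
apply: (trace_commutator_eqmodJ idealJ trace_tau (commutator_in_J a1 a1_drazin)).
exact: drazin_inv_mod_unique a0_drazin a1_drazin.
Qed.
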